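(* Let $\Omega\subset\mathbb{R}^N$ be a domain satisfying condition $(\mathrm{S}_r)$ for some $r>0$. For each $x_0\in\partial\Omega$, with $a,b$ as in $(\mathrm{S}_r)$ for $x_0$, define $\vec p(x_0)=\frac{b-a}{|b-a|}$ (this is well defined). Then $|\vec p(x_0)-\vec p(y_0)|\le\frac1r|x_0-y_0|$ for all $x_0,y_0\in\partial\Omega$.
   Context: A domain is an open connected set. $B_r(a)$ denotes the open Euclidean ball. Condition $(\mathrm{S}_r)$: for every $x_0\in\partial\Omega$ there exist $a,b\in\mathbb{R}^N$ such that $B_r(a)\subset\Omega$, $B_r(b)\subset\mathbb{R}^N\setminus\bar\Omega$ and $|x_0-a|=|x_0-b|=r$. *)

(* R^N is modelled as 'rV[R]_N with R : realType. *)
From HB Require Import structures.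
From mathcomp Require Import all_boot all_order all_algebra.
From mathcomp Require Import all_classical all_reals all_analysis.
Set Implicit Arguments. Unset Strict Implicit. Unset Printing Implicit Defensive.
Import Order.TTheory GRing.Theory Num.Theory.
Import numFieldNormedType.Exports.
Local Open Scope classical_set_scope.
Local Open Scope ring_scope.

Definition enorm {R : realType} {N : nat} (x : 'rV[R]_N) : R :=
  Num.sqrt (\sum_(i < N) (x ord0 i) ^+ 2).

Definition eball {R : realType} {N : nat} (a : 'rV[R]_N) (r : R) : set 'rV[R]_N :=
  [set x | enorm (x - a) < r].

Definition bdry {R : realType} {N : nat} (A : set 'rV[R]_N) : set 'rV[R]_N :=
  closure A `\` interior A.

Definition domain {R : realType} {N : nat} (O : set 'rV[R]_N) : Prop :=
  open O /\ connected O.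

Definition Sr_witness {R : realType} {N : nat} (O : set 'rV[R]_N) (r : R)
  (x0 a b : 'rV[R]_N) : Prop :=
  eball a r `<=` O /\ eball b r `<=` ~` closure O /\
  enorm (x0 - a) = r /\ enorm (x0 - b) = r.

Definition cond_S {R : realType} {N : nat} (O : set 'rV[R]_N) (r : R) : Prop :=
  forall x0, bdry O x0 -> exists a b, Sr_witness O r x0 a b.

(* The balls B_r(a) and B_r(b) of condition (S_r) are disjoint, so
   |a - b| >= 2r; as |x0 - a| = |x0 - b| = r, the point x0 is the midpoint of
   [a, b] and p(x0) = (x0 - a) / r.  For a second boundary point y0 with
   witnesses a', b', put u = x0 - a, v = y0 - a' and e = x0 - y0.  The inner
   ball at a is disjoint from the outer ball at b' and vice versa, which gives
   |e - (u + v)| >= 2r and |e + (u + v)| >= 2r.  Two applications of the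
   parallelogram law then yield |u - v| <= |e|. *)
From HB Require Import structures.
From mathcomp Require Import all_boot all_order all_algebra.
From mathcomp Require Import all_classical all_reals all_analysis.
From mathcomp Require Import ring lra.
Set Implicit Arguments. Unset Strict Implicit. Unset Printing Implicit Defensive.
Import Order.TTheory GRing.Theory Num.Theory.
Import numFieldNormedType.Exports.
Local Open Scope classical_set_scope.
Local Open Scope ring_scope.

Section EuclideanRowSpace.
Variables (R : realType) (N : nat).
Implicit Types (x y z : 'rV[R]_N) (k : R).

Definition dot x y : R := \sum_(i < N) x ord0 i * y ord0 i.

Lemma dotC x y : dot x y = dot y x.
Proof. by apply: eq_bigr => i _; rewrite mulrC. Qed.

Lemma dotDl x y z : dot (x + y) z = dot x z + dot y z.
Proof. by rewrite /dot -big_split; apply: eq_bigr => i _; rewrite mxE mulrDl. Qed.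

Lemma dotNl x z : dot (- x) z = - dot x z.
Proof. by rewrite /dot -sumrN; apply: eq_bigr => i _; rewrite mxE mulNr. Qed.

Lemma dotZl k x z : dot (k *: x) z = k * dot x z.
Proof. by rewrite /dot mulr_sumr; apply: eq_bigr => i _; rewrite mxE mulrA. Qed.

Lemma dotDr x y z : dot z (x + y) = dot z x + dot z y.
Proof. by rewrite dotC dotDl !(dotC z). Qed.

Lemma dotNr x z : dot z (- x) = - dot z x.
Proof. by rewrite dotC dotNl dotC. Qed.

Lemma dotZr k x z : dot z (k *: x) = k * dot z x.
Proof. by rewrite dotC dotZl dotC. Qed.

Lemma dot_ge0 x : 0 <= dot x x.
Proof. by apply: sumr_ge0 => i _; rewrite -expr2 sqr_ge0. Qed.

Lemma dot_eq0 x : dot x x = 0 -> x = 0.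
Proof.
move=> /psumr_eq0P x0; apply/rowP => i; rewrite mxE.
have /eqP : x ord0 i * x ord0 i = 0 by apply: x0 => // j _; rewrite -expr2 sqr_ge0.
by rewrite mulf_eq0 orbb => /eqP.
Qed.

Lemma parallelogram x y :
  dot (x + y) (x + y) + dot (x - y) (x - y) = 2 * dot x x + 2 * dot y y.
Proof. by rewrite !(dotDl, dotDr, dotNl, dotNr) (dotC y x); ring. Qed.

Lemma enorm_sqr x : enorm x ^+ 2 = dot x x.
Proof.
rewrite /enorm sqr_sqrtr; last by apply: sumr_ge0 => i _; exact: sqr_ge0.
by apply: eq_bigr => i _; rewrite expr2.
Qed.

Lemma enorm_ge0 x : 0 <= enorm x.
Proof. exact: sqrtr_ge0. Qed.

Lemma enorm_lt x c : 0 <= c -> (enorm x < c) = (dot x x < c ^+ 2).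
Proof. by move=> c0; rewrite -enorm_sqr ltr_pXn2r // nnegrE enorm_ge0. Qed.

Lemma enorm_le x y : (enorm x <= enorm y) = (dot x x <= dot y y).
Proof. by rewrite -!enorm_sqr ler_pXn2r // nnegrE enorm_ge0. Qed.

Lemma enormZ k x : enorm (k *: x) = `|k| * enorm x.
Proof.
apply: (@pexpIrn _ 2) => //; rewrite ?nnegrE ?mulr_ge0 ?enorm_ge0 //.
by rewrite exprMn !enorm_sqr dotZl dotZr mulrA -expr2 real_normK ?num_real.
Qed.

Lemma disjoint_eball_dist c1 c2 c : 0 <= c ->
  eball c1 c `&` eball c2 c = set0 -> 4 * c ^+ 2 <= dot (c1 - c2) (c1 - c2).
Proof.
move=> c0 no_common; rewrite leNgt; apply/negP => near12.
suff : (eball c1 c `&` eball c2 c) ((2 : R)^-1 *: (c1 + c2)) by rewrite no_common.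
have m1 : (2 : R)^-1 *: (c1 + c2) - c1 = (- (2 : R)^-1) *: (c1 - c2).
  by apply/rowP => i; rewrite !mxE; field.
have m2 : (2 : R)^-1 *: (c1 + c2) - c2 = (2 : R)^-1 *: (c1 - c2).
  by apply/rowP => i; rewrite !mxE; field.
by split; rewrite /eball /= ?m1 ?m2 enorm_lt // !(dotZl, dotZr); lra.
Qed.

End EuclideanRowSpace.

Section ConditionS.
Variables (R : realType) (N : nat) (O : set 'rV[R]_N) (r : R).
Hypothesis r_gt0 : 0 < r.

Lemma inner_outer_ball_dist a b : eball a r `<=` O -> eball b r `<=` ~` closure O ->
  4 * r ^+ 2 <= dot (a - b) (a - b).
Proof.
move=> aO bO; apply: disjoint_eball_dist; first exact: ltW.
by apply/seteqP; split=> // z [/aO/subset_closure zO /bO].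
Qed.

Lemma Sr_witness_midpoint x a b : Sr_witness O r x a b -> b - x = x - a.
Proof.
move=> [aO [bO [/(congr1 (fun t => t ^+ 2)) xa /(congr1 (fun t => t ^+ 2)) xb]]].
rewrite enorm_sqr in xa; rewrite enorm_sqr in xb.
have := inner_outer_ball_dist aO bO.
have -> : a - b = (x - b) - (x - a) by apply/rowP => i; rewrite !mxE; ring.
have := parallelogram (x - b) (x - a); rewrite xa xb => pl far.
have /dot_eq0/eqP : dot (x - b + (x - a)) (x - b + (x - a)) = 0.
  by apply/eqP; rewrite eq_le dot_ge0 andbT; lra.
by rewrite addrC addr_eq0 opprB => /eqP ->.
Qed.

Lemma Sr_witness_direction x a b : Sr_witness O r x a b ->
  (enorm (b - a))^-1 *: (b - a) = r^-1 *: (x - a).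
Proof.
move=> W; have ba : b - a = 2 *: (x - a).
  by rewrite -(subrK x b) (Sr_witness_midpoint W) -addrA scaler_nat mulr2n.
case: W => _ [_ [xa _]].
by rewrite ba enormZ xa scalerA ger0_norm // invfM mulrAC mulVf // mul1r.
Qed.

Lemma Sr_witness_lipschitz x y a b a' b' :
  Sr_witness O r x a b -> Sr_witness O r y a' b' ->
  enorm ((x - a) - (y - a')) <= enorm (x - y).
Proof.
move=> Wx Wy; have bx := Sr_witness_midpoint Wx; have b'y := Sr_witness_midpoint Wy.
case: Wx => aO [bO [/(congr1 (fun t => t ^+ 2)) xa _]].
case: Wy => a'O [b'O [/(congr1 (fun t => t ^+ 2)) ya' _]].
rewrite enorm_sqr in xa; rewrite enorm_sqr in ya'.
set u := x - a in bx xa *; set v := y - a' in b'y ya' *; set e := x - y.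
have ab' : a - b' = e - (u + v).
  by rewrite -(subrK y b') b'y /u /v /e; apply/rowP => i; rewrite !mxE; ring.
have a'b : a' - b = - (e + (u + v)).
  by rewrite -(subrK x b) bx /u /v /e; apply/rowP => i; rewrite !mxE; ring.
have far1 := inner_outer_ball_dist aO b'O; have far2 := inner_outer_ball_dist a'O bO.
rewrite ab' in far1; rewrite a'b dotNl dotNr opprK in far2.
have := parallelogram e (u + v); have := parallelogram u v.
rewrite xa ya' => puv pe.
by rewrite enorm_le; lra.
Qed.

End ConditionS.

Theorem lemma2p2 (R : realType) (N : nat) (O : set 'rV[R]_N) (r : R) :
  0 < r -> domain O -> cond_S O r ->
  forall x0 y0 a b a' b' : 'rV[R]_N,
    bdry O x0 -> bdry O y0 ->
    Sr_witness O r x0 a b -> Sr_witness O r y0 a' b' ->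
    enorm ((enorm (b - a))^-1 *: (b - a) - (enorm (b' - a'))^-1 *: (b' - a'))
      <= r^-1 * enorm (x0 - y0).
Proof.
move=> r_gt0 _ _ x0 y0 a b a' b' _ _ Wx Wy.
rewrite (Sr_witness_direction r_gt0 Wx) (Sr_witness_direction r_gt0 Wy) -scalerBr.
rewrite enormZ gtr0_norm ?invr_gt0 // ler_pM2l ?invr_gt0 //.
exact: (Sr_witness_lipschitz r_gt0 Wx Wy).
Qed.
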